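(* Let $\alpha>1/3$, $\beta>0$ and $\varepsilon>0$. There exist almost surely finite random times $N_1,N_2$ (depending on $\varepsilon$) such that: (i) for all $j\in\mathbb{Z}$ and all $k\ge N_1$: if $X_k=j$ and $\Delta_k(j)/k\ge\varepsilon$ then $X_{k+1}=j+1$; if $X_k=j$ and $\Delta_k(j)/k\le-\varepsilon$ then $X_{k+1}=j-1$; (ii) for all $k\ge N_2$ and all $j\in\mathbb{Z}$: if $X_k<j$ then $\Delta_k(j)/k<3\varepsilon/2$, and if $X_k>j$ then $\Delta_k(j)/k>-3\varepsilon/2$.
   Context: Let $\alpha\in\mathbb{R}$ and $\beta>0$. Let $(X_k)_{k\ge0}$ be the nearest-neighbour random walk on $\mathbb{Z}$ with $X_0=0$ defined as follows. For $k\ge0$ and $j\in\mathbb{Z}$, let $l_k(j):=\#\{m\in\{1,\dots,k\}:\{X_{m-1},X_m\}=\{j-1,j\}\}$, let $\mathcal{F}_k=\sigma(X_0,\dots,X_k)$, and let $\Delta_k(j):=-\alpha l_k(j-1)+l_k(j)-l_k(j+1)+\alpha l_k(j+2)$. The transition probabilities are $\mathbb{P}(X_{k+1}=X_k\pm1\mid\mathcal{F}_k)=\dfrac{e^{\pm\beta\Delta_k(X_k)}}{e^{\beta\Delta_k(X_k)}+e^{-\beta\Delta_k(X_k)}}$. *)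

From Stdlib Require Import Reals ZArith List Classical ClassicalDescription.
Import ListNotations.
Open Scope R_scope.

(* A path prefix is a list of steps: true = +1, false = -1.
   The k-th step (from X_k to X_{k+1}) is [nth k w false]. *)
Definition stepZ (b : bool) : Z := if b then 1%Z else (-1)%Z.

Fixpoint pos (w : list bool) (k : nat) : Z :=
  match k with
  | O => 0%Z
  | S k' => (pos w k' + stepZ (nth k' w false))%Z
  end.

Definition edge_is (a b j : Z) : bool :=
  ((Z.eqb a (j - 1) && Z.eqb b j) || (Z.eqb a j && Z.eqb b (j - 1)))%bool.

Fixpoint ltime (w : list bool) (k : nat) (j : Z) : nat :=
  match k with
  | O => O
  | S k' => (ltime w k' j + (if edge_is (pos w k') (pos w (S k')) j then 1 else 0))%nat
  end.

Definition Delta (alpha : R) (w : list bool) (k : nat) (j : Z) : R :=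
  - alpha * INR (ltime w k (j - 1)) + INR (ltime w k j)
  - INR (ltime w k (j + 1)) + alpha * INR (ltime w k (j + 2)).

Definition p_up (alpha beta : R) (w : list bool) (k : nat) : R :=
  let d := Delta alpha w k (pos w k) in
  exp (beta * d) / (exp (beta * d) + exp (- (beta * d))).

(* probability of the first M steps of the walk being given by w *)
Fixpoint weight (alpha beta : R) (w : list bool) (M : nat) : R :=
  match M with
  | O => 1
  | S M' => weight alpha beta w M' *
            (if nth M' w false then p_up alpha beta w M' else 1 - p_up alpha beta w M')
  end.

Fixpoint paths (M : nat) : list (list bool) :=
  match M with
  | O => [ [] ]
  | S M' => flat_map (fun l => [l ++ [true]; l ++ [false]]) (paths M')
  end.

Definition ind (P : Prop) : R :=
  if excluded_middle_informative P then 1 else 0.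

(* Law of (X_0,...,X_M): probability of an event E determined by the first M steps *)
Definition Prob (alpha beta : R) (M : nat) (E : list bool -> Prop) : R :=
  fold_right Rplus 0 (map (fun w => weight alpha beta w M * ind (E w)) (paths M)).

Definition viol1 (alpha eps : R) (w : list bool) (k : nat) : Prop :=
  exists j : Z, pos w k = j /\
    ((Delta alpha w k j / INR k >= eps /\ pos w (S k) <> (j + 1)%Z) \/
     (Delta alpha w k j / INR k <= - eps /\ pos w (S k) <> (j - 1)%Z)).

Definition viol2 (alpha eps : R) (w : list bool) (k : nat) : Prop :=
  exists j : Z,
    ((pos w k < j)%Z /\ ~ (Delta alpha w k j / INR k < 3 * eps / 2)) \/
    ((pos w k > j)%Z /\ ~ (Delta alpha w k j / INR k > - (3 * eps / 2))).

(* "a.s. there is a finite N such that no violation occurs at any time k >= N",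
   expressed through the finite-dimensional laws:
   P(no violation in [K,oo)) -> 1 as K -> oo, and
   P(no violation in [K,oo)) = inf_M P(no violation in [K,M)). *)
Definition as_eventually_never (alpha beta : R)
  (viol : list bool -> nat -> Prop) : Prop :=
  forall delta : R, delta > 0 ->
    exists K : nat, forall M : nat,
      Prob alpha beta M (fun w => forall k : nat, (K <= k < M)%nat -> ~ viol w k)
        >= 1 - delta.

From Pilot Require Import Defs.
From Stdlib Require Import Reals ZArith List Lra Lia Classical ClassicalDescription.
Import ListNotations.
Import Defs.
Open Scope R_scope.

(* Given the past, the walk steps against
   a drift Delta_k(X_k) with |Delta_k(X_k)| >= eps k with probability at most
   exp(-2 beta eps k); these bounds are summable, so the probability of ever
   violating (i) after time K is at most r^K / (1 - r) with r = exp(-2 beta eps).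
   Part (ii) is then deterministic: once (i) holds from time N on, Delta_k(j)
   grows by at most eps per step on each side of the walker (the walker only
   moves towards a site where |Delta| < eps k, and the local-time increments of
   a step do not push Delta further out on either side), so
   |Delta_k(j)| <= eps k + O(N), which is below 3 eps k / 2 for large k. *)

Lemma pos_S w k : pos w (S k) = (pos w k + stepZ (nth k w false))%Z.
Proof. reflexivity. Qed.

Lemma weight_S a b w M : weight a b w (S M) = weight a b w M *
  (if nth M w false then p_up a b w M else 1 - p_up a b w M).
Proof. reflexivity. Qed.

Section PrefixDetermined.
Variables (w1 w2 : list bool) (n : nat).
Hypothesis agree : forall i, (i < n)%nat -> nth i w1 false = nth i w2 false.

Lemma pos_agree k : (k <= n)%nat -> pos w1 k = pos w2 k.
Proof.
  induction k as [|k IH]; intros; [reflexivity|].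
  rewrite !pos_S, IH, agree by lia; reflexivity.
Qed.

Lemma ltime_agree k j : (k <= n)%nat -> ltime w1 k j = ltime w2 k j.
Proof.
  induction k as [|k IH]; intros; [reflexivity|].
  change (ltime w1 (S k) j) with
    (ltime w1 k j + (if edge_is (pos w1 k) (pos w1 (S k)) j then 1 else 0))%nat.
  change (ltime w2 (S k) j) with
    (ltime w2 k j + (if edge_is (pos w2 k) (pos w2 (S k)) j then 1 else 0))%nat.
  rewrite IH, (pos_agree k), (pos_agree (S k)) by lia; reflexivity.
Qed.

Lemma Delta_agree a k j : (k <= n)%nat -> Delta a w1 k j = Delta a w2 k j.
Proof. intros; unfold Delta; rewrite !(ltime_agree k) by lia; reflexivity. Qed.

Lemma p_up_agree a b k : (k <= n)%nat -> p_up a b w1 k = p_up a b w2 k.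
Proof. intros; unfold p_up; rewrite (pos_agree k), Delta_agree by lia; reflexivity. Qed.

Lemma weight_agree a b k : (k <= n)%nat -> weight a b w1 k = weight a b w2 k.
Proof.
  induction k as [|k IH]; intros; [reflexivity|].
  rewrite !weight_S, IH, agree, p_up_agree by lia; reflexivity.
Qed.

Lemma viol1_agree a e k : (k < n)%nat -> viol1 a e w1 k <-> viol1 a e w2 k.
Proof.
  intros; unfold viol1.
  rewrite (pos_agree k), (pos_agree (S k)) by lia.
  split; intros [j Hj]; exists j; [rewrite <- Delta_agree | rewrite Delta_agree];
    trivial; lia.
Qed.

End PrefixDetermined.

Lemma nth_snoc_lt (l : list bool) s i :
  (i < length l)%nat -> nth i (l ++ [s]) false = nth i l false.
Proof. apply app_nth1. Qed.

Lemma nth_snoc_length (l : list bool) s : nth (length l) (l ++ [s]) false = s.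
Proof. rewrite app_nth2, Nat.sub_diag by lia; reflexivity. Qed.

Lemma paths_length M l : In l (paths M) -> length l = M.
Proof.
  revert l; induction M as [|M IH]; simpl; intros l Hl.
  - destruct Hl as [<-|[]]; reflexivity.
  - apply in_flat_map in Hl as [l' [Hl' Hl]].
    destruct Hl as [<-|[<-|[]]]; rewrite length_app, IH by exact Hl'; simpl; lia.
Qed.

Definition sumR {A} (F : A -> R) (L : list A) : R := fold_right Rplus 0 (map F L).

Lemma sumR_le {A} (F G : A -> R) L :
  (forall x, In x L -> F x <= G x) -> sumR F L <= sumR G L.
Proof.
  unfold sumR; induction L as [|x L IH]; simpl; intros H; [lra|].
  pose proof (H x (or_introl eq_refl)). pose proof (IH (fun y Hy => H y (or_intror Hy))).
  lra.
Qed.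

Lemma sumR_scale {A} c (F : A -> R) L : sumR (fun x => c * F x) L = c * sumR F L.
Proof. unfold sumR; induction L; simpl; [ring|]; rewrite IHL; ring. Qed.

Lemma sumR_flat_map_snoc (F : list bool -> R) L :
  sumR F (flat_map (fun l => [l ++ [true]; l ++ [false]]) L) =
  sumR (fun l => F (l ++ [true]) + F (l ++ [false])) L.
Proof. unfold sumR; induction L; simpl; [reflexivity|]; rewrite IHL; ring. Qed.

Lemma ind_true (P : Prop) : P -> ind P = 1.
Proof. unfold ind; destruct (excluded_middle_informative P); tauto. Qed.

Lemma ind_false (P : Prop) : ~ P -> ind P = 0.
Proof. unfold ind; destruct (excluded_middle_informative P); tauto. Qed.

Lemma ind_bounds P : 0 <= ind P <= 1.
Proof. unfold ind; destruct (excluded_middle_informative P); lra. Qed.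

Definition logistic (t : R) : R := exp t / (exp t + exp (- t)).

Lemma logistic_bounds t : 0 < logistic t < 1.
Proof.
  unfold logistic; pose proof (exp_pos t); pose proof (exp_pos (- t)).
  split; [apply Rdiv_lt_0_compat; lra|].
  apply (Rmult_lt_reg_r (exp t + exp (- t))); [lra|].
  unfold Rdiv; rewrite Rmult_assoc, Rinv_l; lra.
Qed.

Lemma one_minus_logistic t : 1 - logistic t = logistic (- t).
Proof.
  unfold logistic; rewrite Ropp_involutive.
  pose proof (exp_pos t); pose proof (exp_pos (- t)); field; lra.
Qed.

Lemma logistic_le_exp t : logistic t <= exp (2 * t).
Proof.
  unfold logistic; pose proof (exp_pos t); pose proof (exp_pos (- t)).
  replace (exp (2 * t)) with (exp t / exp (- t))
    by (rewrite exp_Ropp; unfold Rdiv; rewrite Rinv_inv, <- exp_plus; f_equal; ring).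
  apply Rmult_le_compat_l; [lra|].
  apply Rinv_le_contravar; lra.
Qed.

Lemma weight_nonneg a b w M : 0 <= weight a b w M.
Proof.
  induction M as [|M IH]; [simpl; lra|]; rewrite weight_S.
  pose proof (logistic_bounds (b * Delta a w M (pos w M))) as Hp.
  change (logistic _) with (p_up a b w M) in Hp.
  destruct (nth M w false); apply Rmult_le_pos; lra.
Qed.

Lemma Prob_monotone a b M (E1 E2 : list bool -> Prop) :
  (forall w, E1 w -> E2 w) -> Prob a b M E1 <= Prob a b M E2.
Proof.
  intros H; apply sumR_le; intros w _.
  apply Rmult_le_compat_l; [apply weight_nonneg|].
  destruct (classic (E1 w)) as [H1|H1].
  - rewrite (ind_true _ H1), ind_true by auto; lra.
  - rewrite (ind_false _ H1); apply ind_bounds.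
Qed.

Lemma Prob_S a b M E : Prob a b (S M) E =
  sumR (fun l => weight a b l M *
     (p_up a b l M * ind (E (l ++ [true])) + (1 - p_up a b l M) * ind (E (l ++ [false]))))
     (paths M).
Proof.
  etransitivity; [apply (sumR_flat_map_snoc (fun w => weight a b w (S M) * ind (E w)))|].
  unfold sumR; f_equal.
  apply map_ext_in; intros l Hl; apply paths_length in Hl.
  assert (agree : forall s i, (i < M)%nat -> nth i (l ++ [s]) false = nth i l false)
    by (intros; apply nth_snoc_lt; lia).
  rewrite !weight_S, !(weight_agree _ _ M (agree _)), !(p_up_agree _ _ M (agree _)) by lia.
  rewrite <- Hl, !nth_snoc_length; ring.
Qed.

Definition never_on (viol : list bool -> nat -> Prop) (K M : nat) (w : list bool) : Prop :=
  forall k, (K <= k < M)%nat -> ~ viol w k.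

Lemma never_on_snoc_inv al e K l s :
  never_on (viol1 al e) K (S (length l)) (l ++ [s]) -> never_on (viol1 al e) K (length l) l.
Proof.
  intros H k Hk Hv; apply (H k); [lia|].
  apply (viol1_agree (l ++ [s]) l (length l)); [intros; apply nth_snoc_lt|..]; trivial; lia.
Qed.

Lemma never_on_snoc al e K l s :
  never_on (viol1 al e) K (length l) l ->
  ((length l < K)%nat \/ ~ viol1 al e (l ++ [s]) (length l)) ->
  never_on (viol1 al e) K (S (length l)) (l ++ [s]).
Proof.
  intros H Hlast k Hk Hv.
  destruct (Nat.eq_dec k (length l)) as [->|Hne]; [destruct Hlast; [lia|tauto]|].
  apply (H k); [lia|].
  apply (viol1_agree (l ++ [s]) l (length l)); [intros; apply nth_snoc_lt|..]; trivial; lia.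
Qed.

Lemma viol1_snoc al e l s :
  viol1 al e (l ++ [s]) (length l) ->
  let r := Delta al l (length l) (pos l (length l)) / INR (length l) in
  if s then r <= - e else r >= e.
Proof.
  assert (agree : forall i, (i < length l)%nat -> nth i (l ++ [s]) false = nth i l false)
    by (intros; apply nth_snoc_lt; lia).
  intros [j [Hj H]]; simpl.
  rewrite (pos_agree _ _ _ agree (length l)) in Hj by lia.
  rewrite pos_S, nth_snoc_length, (pos_agree _ _ _ agree (length l)),
    (Delta_agree _ _ _ agree) in H by lia.
  subst j; destruct s; simpl stepZ in H; destruct H as [[H1 H2]|[H1 H2]];
    trivial; exfalso; lia.
Qed.

Lemma exp_le_mono x y : x <= y -> exp x <= exp y.
Proof. intros [H|H]; [left; apply exp_increasing | rewrite H]; lra. Qed.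

Lemma exp_mult_INR x m : exp (x * INR m) = exp x ^ m.
Proof.
  induction m as [|m IH]; [simpl; rewrite Rmult_0_r; apply exp_0|].
  rewrite S_INR, <- tech_pow_Rmult, <- IH, <- exp_plus; f_equal; ring.
Qed.

Lemma violating_step_prob_le al b e l s : b > 0 -> e > 0 ->
  viol1 al e (l ++ [s]) (length l) ->
  (if s then p_up al b l (length l) else 1 - p_up al b l (length l))
    <= exp (- (2 * b * e)) ^ length l.
Proof.
  intros Hb He Hv; apply viol1_snoc in Hv; simpl in Hv.
  set (M := length l) in *; set (d := Delta al l M (pos l M)) in *.
  (* At time 0, Rocq's [d / 0 = 0] rules out a violation. *)
  assert (HM : 0 < INR M).
  { destruct M; [|apply lt_0_INR; lia].
    simpl in Hv; rewrite Rdiv_0_r in Hv; destruct s; lra. }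
  assert (Hd : d = d / INR M * INR M) by (field; lra).
  rewrite <- exp_mult_INR; unfold p_up; fold M d; fold (logistic (b * d)).
  destruct s; [|rewrite one_minus_logistic];
    (eapply Rle_trans; [apply logistic_le_exp|]); apply exp_le_mono.
  - assert (d <= - e * INR M) by (rewrite Hd; apply Rmult_le_compat_r; lra). nra.
  - assert (e * INR M <= d) by (rewrite Hd; apply Rmult_le_compat_r; lra). nra.
Qed.

Lemma lower_bound_from_losses (f c T : nat -> R) :
  1 <= f 0%nat -> (forall m, 0 <= c m <= 1) -> (forall m, c m <= T m - T (S m)) ->
  (forall m, (1 - c m) * f m <= f (S m)) ->
  forall M, 1 - (T 0%nat - T M) <= f M.
Proof.
  intros H0 Hc HT Hf.
  assert (decr : forall M, T M <= T 0%nat).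
  { induction M as [|M IH]; [lra|]; pose proof (HT M); pose proof (Hc M); lra. }
  induction M as [|M IH]; [lra|].
  pose proof (Hf M); pose proof (Hc M); pose proof (HT M); pose proof (decr M).
  assert ((1 - c M) * (1 - (T 0%nat - T M)) <= (1 - c M) * f M)
    by (apply Rmult_le_compat_l; lra).
  nra.
Qed.

Section DriftObeyed.
Variables (al b e : R).
Hypotheses (Hb : b > 0) (He : e > 0).

Let r := exp (- (2 * b * e)).

Lemma rate_bounds : 0 < r < 1.
Proof. split; [apply exp_pos|]; rewrite <- exp_0; apply exp_increasing; nra. Qed.

Definition loss (K M : nat) : R := if (K <=? M)%nat then r ^ M else 0.

Lemma loss_bounds K M : 0 <= loss K M <= 1.
Proof.
  pose proof rate_bounds; unfold loss; destruct (K <=? M)%nat; [|lra].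
  split; [apply pow_le; lra|].
  rewrite <- (pow1 M); apply pow_incr; lra.
Qed.

Lemma survival_conditional K l :
  let M := length l in let p := p_up al b l M in
  (1 - loss K M) * ind (never_on (viol1 al e) K M l) <=
  p * ind (never_on (viol1 al e) K (S M) (l ++ [true])) +
  (1 - p) * ind (never_on (viol1 al e) K (S M) (l ++ [false])).
Proof.
  intros M p.
  pose proof (logistic_bounds (b * Delta al l M (pos l M))) as Hp.
  change (logistic _) with p in Hp.
  pose proof (loss_bounds K M).
  pose proof (ind_bounds (never_on (viol1 al e) K (S M) (l ++ [true]))).
  pose proof (ind_bounds (never_on (viol1 al e) K (S M) (l ++ [false]))).
  destruct (classic (never_on (viol1 al e) K M l)) as [HE|HE].
  2:{ rewrite (ind_false _ HE); nra. }
  rewrite (ind_true _ HE).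
  assert (survive : forall s, ~ viol1 al e (l ++ [s]) M \/ (M < K)%nat ->
            ind (never_on (viol1 al e) K (S M) (l ++ [s])) = 1)
    by (intros s Hs; apply ind_true, never_on_snoc; tauto).
  destruct (Nat.ltb_spec M K) as [HMK|HKM].
  { rewrite !survive by tauto; lra. }
  assert (Hloss : loss K M = r ^ M)
    by (unfold loss; destruct (Nat.leb_spec K M); [reflexivity | lia]).
  destruct (classic (viol1 al e (l ++ [true]) M)) as [Vt|Vt];
  [|destruct (classic (viol1 al e (l ++ [false]) M)) as [Vf|Vf]].
  - assert (~ viol1 al e (l ++ [false]) M).
    { intros Vf; apply viol1_snoc in Vt, Vf; simpl in Vt, Vf; lra. }
    rewrite (survive false) by tauto.
    pose proof (violating_step_prob_le al b e l true Hb He Vt) as Hq.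
    change (p <= r ^ M) in Hq; nra.
  - rewrite (survive true) by tauto.
    pose proof (violating_step_prob_le al b e l false Hb He Vf) as Hq.
    change (1 - p <= r ^ M) in Hq; nra.
  - rewrite !survive by tauto; lra.
Qed.

Lemma survival_step K M :
  (1 - loss K M) * Prob al b M (never_on (viol1 al e) K M) <=
  Prob al b (S M) (never_on (viol1 al e) K (S M)).
Proof.
  rewrite Prob_S; unfold Prob; fold (sumR (fun w => weight al b w M *
    ind (never_on (viol1 al e) K M w)) (paths M)).
  rewrite <- sumR_scale; apply sumR_le; intros l Hl.
  apply paths_length in Hl; subst M.
  pose proof (survival_conditional K l); pose proof (weight_nonneg al b l (length l)).
  simpl in *; nra.
Qed.

Lemma loss_telescopes K M :
  loss K M = r ^ Nat.max M K / (1 - r) - r ^ Nat.max (S M) K / (1 - r).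
Proof.
  pose proof rate_bounds; unfold loss.
  destruct (Nat.leb_spec K M).
  - rewrite !Nat.max_l by lia; simpl; field; lra.
  - rewrite !Nat.max_r by lia; lra.
Qed.

Lemma viol1_free_prob_ge K M :
  1 - r ^ K / (1 - r) <= Prob al b M (never_on (viol1 al e) K M).
Proof.
  pose proof rate_bounds.
  (* [T m] is the tail sum of the losses from time [m] on. *)
  set (T m := r ^ Nat.max m K / (1 - r)).
  assert (HT : 0 <= T M).
  { apply Rmult_le_pos; [apply pow_le | apply Rlt_le, Rinv_0_lt_compat]; lra. }
  enough (1 - (T 0%nat - T M) <= Prob al b M (never_on (viol1 al e) K M))
    by (unfold T in *; simpl in *; lra).
  apply (lower_bound_from_losses (fun M => Prob al b M (never_on (viol1 al e) K M)) (loss K)).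
  - unfold Prob; simpl; rewrite ind_true by (intros k; lia); lra.
  - apply loss_bounds.
  - intros m; rewrite loss_telescopes; unfold T; lra.
  - apply survival_step.
Qed.

Lemma viol1_eventually_never : as_eventually_never al b (fun w k => viol1 al e w k).
Proof.
  intros delta Hdelta; pose proof rate_bounds.
  destruct (pow_lt_1_zero r ltac:(rewrite Rabs_pos_eq; lra) (delta * (1 - r)))
    as [K HK]; [nra|].
  exists K; intros M.
  apply Rle_ge; eapply Rle_trans; [|apply (viol1_free_prob_ge K M)].
  specialize (HK K (le_n K)); rewrite Rabs_pos_eq in HK by (apply pow_le; lra).
  assert (r ^ K / (1 - r) <= delta).
  { apply (Rmult_le_reg_r (1 - r)); [lra|].
    unfold Rdiv; rewrite Rmult_assoc, Rinv_l; lra. }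
  lra.
Qed.
End DriftObeyed.

Definition crossed_edge (w : list bool) (k : nat) : Z :=
  if nth k w false then (pos w k + 1)%Z else pos w k.

Lemma edge_is_crossed w k j :
  edge_is (pos w k) (pos w (S k)) j = Z.eqb j (crossed_edge w k).
Proof.
  unfold edge_is, crossed_edge; rewrite pos_S.
  destruct (nth k w false); simpl stepZ;
  repeat match goal with |- context [Z.eqb ?a ?b] => destruct (Z.eqb_spec a b) end;
  simpl; trivial; exfalso; lia.
Qed.

(* Change of Delta(j) when the walk crosses the edge with index c, as a function of j - c. *)
Definition Delta_kernel (al : R) (z : Z) : R :=
  if Z.eqb z 1 then - al else if Z.eqb z 0 then 1
  else if Z.eqb z (-1) then -1 else if Z.eqb z (-2) then al else 0.

Lemma Delta_S al w k j :
  Delta al w (S k) j = Delta al w k j + Delta_kernel al (j - crossed_edge w k).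
Proof.
  unfold Delta, Delta_kernel; simpl ltime; rewrite !edge_is_crossed, !plus_INR.
  repeat match goal with |- context [Z.eqb ?a ?b] => destruct (Z.eqb_spec a b) end;
  simpl INR; ring || (exfalso; lia).
Qed.

Lemma Delta_kernel_upper_end al : Delta_kernel al 0 = 1.
Proof. reflexivity. Qed.

Lemma Delta_kernel_lower_end al : Delta_kernel al (-1) = -1.
Proof. reflexivity. Qed.

Lemma Delta_kernel_nonpos al z : 0 <= al -> (1 <= z)%Z -> Delta_kernel al z <= 0.
Proof.
  intros; unfold Delta_kernel;
  repeat match goal with |- context [Z.eqb ?a ?b] => destruct (Z.eqb_spec a b) end;
  lra || (exfalso; lia).
Qed.

Lemma Delta_kernel_nonneg al z : 0 <= al -> (z <= -2)%Z -> 0 <= Delta_kernel al z.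
Proof.
  intros; unfold Delta_kernel;
  repeat match goal with |- context [Z.eqb ?a ?b] => destruct (Z.eqb_spec a b) end;
  lra || (exfalso; lia).
Qed.

Lemma ltime_le w k j : (ltime w k j <= k)%nat.
Proof. induction k; simpl; [lia|]; destruct edge_is; lia. Qed.

Lemma Delta_bounds al w k j : 0 <= al ->
  - ((1 + al) * INR k) <= Delta al w k j <= (1 + al) * INR k.
Proof.
  intros Ha; unfold Delta.
  pose proof (le_INR _ _ (ltime_le w k (j - 1))); pose proof (pos_INR (ltime w k (j - 1))).
  pose proof (le_INR _ _ (ltime_le w k j)); pose proof (pos_INR (ltime w k j)).
  pose proof (le_INR _ _ (ltime_le w k (j + 1))); pose proof (pos_INR (ltime w k (j + 1))).
  pose proof (le_INR _ _ (ltime_le w k (j + 2))); pose proof (pos_INR (ltime w k (j + 2))).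
  split; nra.
Qed.

(* Before time N, Delta is controlled by the crude bound |Delta_k| <= (1 + al) k. *)
Lemma drift_at_walker al e N w k : 0 <= al -> e > 0 ->
  ((N <= k)%nat -> ~ viol1 al e w k) ->
  let d := Delta al w k (pos w k) in
  if nth k w false then - (e * INR k + (1 + al) * INR N) <= d
  else d <= e * INR k + (1 + al) * INR N.
Proof.
  intros Ha He Hv d.
  pose proof (pos_INR k); pose proof (pos_INR N).
  assert (0 <= e * INR k) by (apply Rmult_le_pos; lra).
  destruct (classic ((k < N)%nat \/ k = 0%nat)) as [Hsmall|Hlarge].
  { pose proof (Delta_bounds al w k (pos w k) Ha) as Hd; fold d in Hd.
    assert ((1 + al) * INR k <= (1 + al) * INR N).
    { apply Rmult_le_compat_l; [lra|]; apply le_INR.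
      destruct Hsmall; lia. }
    destruct (nth k w false); lra. }
  assert (Hk : 0 < INR k) by (apply lt_0_INR; lia).
  assert (Hnv : ~ viol1 al e w k) by (apply Hv; lia).
  assert (Hdk : d = d / INR k * INR k) by (field; lra).
  assert (0 <= (1 + al) * INR N) by (apply Rmult_le_pos; lra).
  destruct (nth k w false) eqn:Hs; apply Rnot_lt_le; intros Hd; apply Hnv;
    exists (pos w k); split; trivial; rewrite pos_S, Hs; simpl stepZ.
  - right; split; [|lia]; fold d; set (q := d / INR k) in *; nra.
  - left; split; [|lia]; fold d; set (q := d / INR k) in *; nra.
Qed.

Definition envelope (al e : R) (N k : nat) : R := e * INR k + (1 + al) * INR N + 1.

Definition Delta_enveloped al e N w k : Prop :=
  forall j, ((pos w k < j)%Z -> Delta al w k j <= envelope al e N k) /\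
            ((j < pos w k)%Z -> - envelope al e N k <= Delta al w k j).

(* Away from the site just left by the walker, the increments are <= 0 to its
   right and >= 0 to its left; at that site [drift_at_walker] applies. *)
Lemma Delta_enveloped_S al e N w k : 0 <= al -> e > 0 ->
  ((N <= k)%nat -> ~ viol1 al e w k) ->
  Delta_enveloped al e N w k -> Delta_enveloped al e N w (S k).
Proof.
  intros Ha He Hv IH j.
  pose proof (drift_at_walker al e N w k Ha He Hv) as Hx; simpl in Hx.
  assert (Hgrow : envelope al e N (S k) = envelope al e N k + e)
    by (unfold envelope; rewrite S_INR; ring).
  rewrite Delta_S, Hgrow, pos_S; unfold crossed_edge.
  set (x := pos w k) in *; destruct (IH j) as [IHgt IHlt].
  destruct (nth k w false); simpl stepZ; split; intros Hj.
  - pose proof (Delta_kernel_nonpos al (j - (x + 1)) Ha ltac:(lia)).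
    specialize (IHgt ltac:(lia)); lra.
  - destruct (Z.eq_dec j x) as [->|Hne].
    + replace (x - (x + 1))%Z with (-1)%Z by lia; rewrite Delta_kernel_lower_end.
      unfold envelope; lra.
    + pose proof (Delta_kernel_nonneg al (j - (x + 1)) Ha ltac:(lia)).
      specialize (IHlt ltac:(lia)); lra.
  - destruct (Z.eq_dec j x) as [->|Hne].
    + rewrite Z.sub_diag, Delta_kernel_upper_end; unfold envelope; lra.
    + pose proof (Delta_kernel_nonpos al (j - x) Ha ltac:(lia)).
      specialize (IHgt ltac:(lia)); lra.
  - pose proof (Delta_kernel_nonneg al (j - x) Ha ltac:(lia)).
    specialize (IHlt ltac:(lia)); lra.
Qed.

Lemma Delta_enveloped_upto al e N M w : 0 <= al -> e > 0 ->
  never_on (viol1 al e) N M w -> forall k, (k <= M)%nat -> Delta_enveloped al e N w k.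
Proof.
  intros Ha He Hw; induction k as [|k IH]; intros Hk.
  - intros j; unfold Delta, envelope; simpl.
    assert (0 <= (1 + al) * INR N) by (apply Rmult_le_pos; [lra | apply pos_INR]).
    split; intros; lra.
  - apply Delta_enveloped_S; [trivial | trivial | | apply IH; lia].
    intros HNk; apply Hw; lia.
Qed.

Lemma envelope_eventually_below al e N : 0 <= al -> e > 0 ->
  exists n, forall k, (n <= k)%nat -> 0 < INR k /\ envelope al e N k < 3 * e / 2 * INR k.
Proof.
  intros Ha He.
  assert (0 <= (1 + al) * INR N) by (apply Rmult_le_pos; [lra | apply pos_INR]).
  destruct (INR_archimed (e / 2) ((1 + al) * INR N + 1)) as [n Hn]; [lra|].
  exists n; intros k Hk; apply le_INR in Hk; unfold envelope.
  assert (0 < INR n) by nra.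
  split; nra.
Qed.

Lemma viol1_free_implies_viol2_free al e N : 0 <= al -> e > 0 ->
  exists K, forall M w, never_on (viol1 al e) N M w -> never_on (viol2 al e) K M w.
Proof.
  intros Ha He.
  destruct (envelope_eventually_below al e N Ha He) as [K HK]; exists K.
  intros M w Hw k Hk [j Hj].
  destruct (HK k ltac:(lia)) as [Hk0 Hbelow].
  destruct (Delta_enveloped_upto al e N M w Ha He Hw k ltac:(lia) j) as [Hgt Hlt].
  set (d := Delta al w k j) in *.
  assert (Hdk : d = d / INR k * INR k) by (field; lra).
  set (q := d / INR k) in *.
  destruct Hj as [[Hj Hq]|[Hj Hq]]; apply Hq.
  - specialize (Hgt Hj); nra.
  - specialize (Hlt ltac:(lia)); nra.
Qed.

Theorem mainTheorem12 (alpha beta eps : R) :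
  alpha > 1 / 3 -> beta > 0 -> eps > 0 ->
  as_eventually_never alpha beta (fun w k => viol1 alpha eps w k) /\
  as_eventually_never alpha beta (fun w k => viol2 alpha eps w k).
Proof.
  intros Halpha Hbeta Heps.
  pose proof (viol1_eventually_never alpha beta eps Hbeta Heps) as part1.
  split; [exact part1|].
  intros delta Hdelta; destruct (part1 delta Hdelta) as [K HK].
  destruct (viol1_free_implies_viol2_free alpha eps K ltac:(lra) Heps) as [K2 HK2].
  exists K2; intros M.
  eapply Rge_trans; [|exact (HK M)].
  apply Rle_ge, Prob_monotone, HK2.
Qed.
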